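(* In the bilevel setting of the context, suppose (A2) and (A4) hold. Then the GMFCQ holds at $x^*$ for $\Omega_1$ if and only if the GMFCQ holds for $\Omega_2$ at $(x^*,y^*,\mu^*,\xi^* )$.
   Context: Lower-level problem $(P_x)$: $\min_yf(x,y)$ s.t. $h(x,y)=0$, $g(x,y)\le0$; upper-level constraints $H(x,y)=0\in\mathbb{R}^p$, $G(x,y)\le0\in\mathbb{R}^q$, upper objective $F$; $(x,y)\in\mathbb{R}^n\times\mathbb{R}^m$, $h\to\mathbb{R}^r$, $g\to\mathbb{R}^s$; $f,g,h\in C^3$, $F,G,H\in C^2$ around $(x^*,y^* )$. $\mathcal{L}(x;y,\mu,\xi)=f+\mu^Th+\xi^Tg$; $(\mu^*,\xi^* )$ satisfies $\nabla_y\mathcal{L}(x^*;y^*,\mu^*,\xi^* )=0$, $h(x^*,y^* )=0$, $0\le\xi^*\perp g(x^*,y^* )\le0$. $I_G=\{i:G_i(x^*,y^* )=0\}$. (A2) SSOSC: for every such KKT multiplier, $d_y^T\nabla^2_{yy}\mathcal{L}(x^*;y^*,\mu^*,\xi^* )d_y>0$ for all $d_y\ne0$ with $\mathcal{J}_yh(x^*,y^* )d_y=0$ and $\nabla_yg_i(x^*,y^* )^Td_y=0$ whenever $g_i(x^*,y^* )=0,\xi^*_i>0$. (A4) LICQ: $\{\nabla_yh_i(x^*,y^* )\}_{i\in[r]}\cup\{\nabla_yg_i(x^*,y^* ):g_i(x^*,y^* )=0\}$ linearly independent. Under (A2),(A4) there are locally Lipschitz $(y(x),\mu(x),\xi(x))$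 near $x^*$, equal to $(y^*,\mu^*,\xi^* )$ at $x^*$, locally uniquely solving the KKT system of $(P_x)$. $\Omega_1=\{x:H(x,y(x))=0,G(x,y(x))\le0\}$; $\Omega_2=\{(x,y,\mu,\xi):H(x,y)=0,G(x,y)\le0,\nabla_y\mathcal{L}(x;y,\mu,\xi)=0,h(x,y)=0,g(x,y)-\Pi_{\mathbb{R}^s_-}(g(x,y)+\xi)=0\}$ with $\Pi_{\mathbb{R}^s_-}(z)_i=\min\{0,z_i\}$. $\partial\Pi_{\mathbb{R}^s_-}(z)$ (Clarke Jacobian) = diagonal $W=\mathrm{diag}(w)$ with $w_i=1$ if $z_i<0$, $0$ if $z_i>0$, $w_i\in[0,1]$ if $z_i=0$. All derivatives below at $(x^*,y^*,\mu^*,\xi^* )$. For such $W$: $\mathcal{A}(W)=\begin{pmatrix}\nabla^2_{yy}\mathcal{L}&\mathcal{J}_yh^T&\mathcal{J}_yg^T\\ \mathcal{J}_yh&0&0\\(I-W)\mathcal{J}_yg&0&-W\end{pmatrix}$ (invertible under (A2),(A4)), $\mathcal{H}(W)=\mathcal{A}(W)^{-1}\begin{pmatrix}\nabla^2_{yx}\mathcal{L}\\ \mathcal{J}_xh\\(I-W)\mathcal{J}_xg\end{pmatrix}$. GMFCQ for $\Omega_1$ at $x^*$: for every $W\in\partial\Pi_{\mathbb{R}^s_-}(g(x^*,y^* )+\xi^* )$, $M:=\mathcal{J}_xH-\mathcal{J}_yH[I_m\ 0\ 0]\mathcal{H}(W)$ has full row rank and there is $d_x$ with $Md_x=0$ and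 $(\nabla_xG_i^T-\nabla_yG_i^T[I_m\ 0\ 0]\mathcal{H}(W))d_x<0$ for $i\in I_G$. GMFCQ for $\Omega_2$ at $(x^*,y^*,\mu^*,\xi^* )$: for every such $W$, $A=\begin{pmatrix}\mathcal{J}_xH&\mathcal{J}_yH&0&0\\ \nabla^2_{yx}\mathcal{L}&\nabla^2_{yy}\mathcal{L}&\mathcal{J}_yh^T&\mathcal{J}_yg^T\\ \mathcal{J}_xh&\mathcal{J}_yh&0&0\\(I-W)\mathcal{J}_xg&(I-W)\mathcal{J}_yg&0&-W\end{pmatrix}$ has full row rank and there is $d=(d_x,d_y,d_\mu,d_\xi)\in\ker A$ with $\nabla_xG_i^Td_x+\nabla_yG_i^Td_y<0$ for $i\in I_G$. *)

From mathcomp Require Import all_boot all_order all_algebra.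
Set Implicit Arguments. Unset Strict Implicit. Unset Printing Implicit Defensive.
Import Order.TTheory GRing.Theory Num.Theory.
Local Open Scope ring_scope.

(* All derivatives are evaluated at (xs,ys,mus,xis) and are given as matrices:
   Lyy = nabla^2_yy L (m x m), Lyx = nabla^2_yx L (m x n),
   Jxh, Jyh = J_x h, J_y h (r x n, r x m), Jxg, Jyg (s x n, s x m),
   JxH, JyH (p x n, p x m), JxG, JyG (q x n, q x m) (row i = nabla G_i^T). *)

(* w = diagonal of an element W of the Clarke Jacobian of Pi_{R^s_-} at z. *)
Definition clarke_proj_minus {R : realFieldType} {s : nat}
    (z : 'I_s -> R) (w : 'I_s -> R) : Prop :=
  forall i, (z i < 0 -> w i = 1) /\ (0 < z i -> w i = 0)
            /\ (z i = 0 -> 0 <= w i <= 1).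

Definition Wmx {R : realFieldType} {s : nat} (w : 'I_s -> R) : 'M[R]_s :=
  diag_mx (\row_i w i).

Definition AW {R : realFieldType} {m r s : nat}
    (Lyy : 'M[R]_m) (Jyh : 'M[R]_(r, m)) (Jyg : 'M[R]_(s, m))
    (w : 'I_s -> R) : 'M[R]_(m + (r + s)) :=
  col_mx (row_mx Lyy (row_mx Jyh^T Jyg^T))
    (col_mx (row_mx Jyh (row_mx (0 : 'M_(r, r)) (0 : 'M_(r, s))))
            (row_mx ((1%:M - Wmx w) *m Jyg)
                    (row_mx (0 : 'M_(s, r)) (- Wmx w)))).

Definition BW {R : realFieldType} {n m r s : nat}
    (Lyx : 'M[R]_(m, n)) (Jxh : 'M[R]_(r, n)) (Jxg : 'M[R]_(s, n))
    (w : 'I_s -> R) : 'M[R]_(m + (r + s), n) :=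
  col_mx Lyx (col_mx Jxh ((1%:M - Wmx w) *m Jxg)).

Definition HyW {R : realFieldType} {n m r s : nat}
    (Lyy : 'M[R]_m) (Lyx : 'M[R]_(m, n)) (Jxh : 'M[R]_(r, n)) (Jyh : 'M[R]_(r, m))
    (Jxg : 'M[R]_(s, n)) (Jyg : 'M[R]_(s, m)) (w : 'I_s -> R) : 'M[R]_(m, n) :=
  usubmx (invmx (AW Lyy Jyh Jyg w) *m BW Lyx Jxh Jxg w).

Definition GMFCQ_Omega1 {R : realFieldType} {n m r s p q : nat}
    (Lyy : 'M[R]_m) (Lyx : 'M[R]_(m, n)) (Jxh : 'M[R]_(r, n)) (Jyh : 'M[R]_(r, m))
    (Jxg : 'M[R]_(s, n)) (Jyg : 'M[R]_(s, m))
    (JxH : 'M[R]_(p, n)) (JyH : 'M[R]_(p, m))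
    (JxG : 'M[R]_(q, n)) (JyG : 'M[R]_(q, m))
    (g0 xi : 'I_s -> R) (G0 : 'I_q -> R) : Prop :=
  forall w : 'I_s -> R, clarke_proj_minus (fun i => g0 i + xi i) w ->
    let Hy := HyW Lyy Lyx Jxh Jyh Jxg Jyg w in
    let M := JxH - JyH *m Hy in
    row_free M /\
    exists dx : 'cV[R]_n, M *m dx = 0 /\
      forall i : 'I_q, G0 i = 0 -> ((JxG - JyG *m Hy) *m dx) i 0 < 0.

Definition GMFCQ_Omega2 {R : realFieldType} {n m r s p q : nat}
    (Lyy : 'M[R]_m) (Lyx : 'M[R]_(m, n)) (Jxh : 'M[R]_(r, n)) (Jyh : 'M[R]_(r, m))
    (Jxg : 'M[R]_(s, n)) (Jyg : 'M[R]_(s, m))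
    (JxH : 'M[R]_(p, n)) (JyH : 'M[R]_(p, m))
    (JxG : 'M[R]_(q, n)) (JyG : 'M[R]_(q, m))
    (g0 xi : 'I_s -> R) (G0 : 'I_q -> R) : Prop :=
  forall w : 'I_s -> R, clarke_proj_minus (fun i => g0 i + xi i) w ->
    let A : 'M[R]_(p + (m + (r + s)), n + (m + (r + s))) :=
      col_mx (row_mx JxH (row_mx JyH (0 : 'M_(p, r + s))))
             (row_mx (BW Lyx Jxh Jxg w) (AW Lyy Jyh Jyg w)) in
    row_free A /\
    exists d : 'cV[R]_(n + (m + (r + s))), A *m d = 0 /\
      forall i : 'I_q, G0 i = 0 ->
        (JxG *m usubmx d + JyG *m usubmx (dsubmx d)) i 0 < 0.

Definition SSOSC {R : realFieldType} {m r s : nat}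
    (Lyy : 'M[R]_m) (Jyh : 'M[R]_(r, m)) (Jyg : 'M[R]_(s, m))
    (g0 xi : 'I_s -> R) : Prop :=
  forall dy : 'cV[R]_m, dy != 0 -> Jyh *m dy = 0 ->
    (forall i, g0 i = 0 -> 0 < xi i -> (Jyg *m dy) i 0 = 0) ->
    0 < (dy^T *m Lyy *m dy) 0 0.

Definition LICQ {R : realFieldType} {m r s : nat}
    (Jyh : 'M[R]_(r, m)) (Jyg : 'M[R]_(s, m)) (g0 : 'I_s -> R) : Prop :=
  forall (a : 'rV[R]_r) (b : 'rV[R]_s),
    (forall i, g0 i != 0 -> b 0 i = 0) ->
    a *m Jyh + b *m Jyg = 0 -> a = 0 /\ b = 0.

(* Under (A2) and (A4) every matrix A(W) is invertible: for a kernel vector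
   (dy, dmu, dxi), the rows of (I - W) J_y g dy = W dxi force
   (J_y g dy)_i dxi_i >= 0, so dy^T L_yy dy = -(J_y g dy)^T dxi <= 0 and SSOSC
   gives dy = 0; LICQ then kills the multipliers.  With A(W) invertible, the
   (y, mu, xi)-block of the Jacobian defining Omega_2 can be eliminated as in an
   implicit-function (Schur complement) argument: kernel vectors of the big
   Jacobian are exactly (dx, -H(W) dx) with dx in the kernel of the reduced
   Jacobian M, and similarly for left kernels, so the Mangasarian-Fromovitz
   conditions for the two systems coincide for every W. *)
From mathcomp Require Import all_boot all_order all_algebra.
From mathcomp Require Import ring.
Import Order.TTheory GRing.Theory Num.Theory.
Set Implicit Arguments. Unset Strict Implicit.
Local Open Scope ring_scope.

Definition MFCQ {R : numFieldType} {N p q : nat}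
    (E : 'M[R]_(p, N)) (G : 'M[R]_(q, N)) (active : 'I_q -> Prop) : Prop :=
  row_free E /\
  exists d : 'cV[R]_N, E *m d = 0 /\ forall i, active i -> (G *m d) i 0 < 0.

Lemma row_freeP (F : fieldType) (m n : nat) (A : 'M[F]_(m, n)) :
  reflect (forall v : 'rV_m, v *m A = 0 -> v = 0) (row_free A).
Proof.
apply: (iffP idP) => [rfA v vA0|]; last exact: inj_row_free.
by apply: (row_free_inj rfA); rewrite /= vA0 mul0mx.
Qed.

Lemma mul_row0_mx (R : pzRingType) (a m k c : nat)
    (A : 'M[R]_(a, m)) (X : 'M[R]_(m + k, c)) :
  row_mx A 0 *m X = A *m usubmx X.
Proof. by rewrite -{1}[X]vsubmxK mul_row_col mul0mx addr0. Qed.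

Lemma clarke_proj_minus_bounds (R : realFieldType) (s : nat) (z w : 'I_s -> R) :
  clarke_proj_minus z w -> forall i, 0 <= w i <= 1.
Proof.
move=> Hw i; have [wneg [wpos wzero]] := Hw i.
by case: (ltrgtP (z i) 0) => [/wneg ->|/wpos ->|/wzero //]; rewrite ?lexx ?ler01.
Qed.

Lemma complementary_mul_ge0 (R : realDomainType) (w u d : R) :
  0 <= w <= 1 -> (1 - w) * u = w * d -> 0 <= u * d.
Proof.
case/andP=> w_ge0 w_le1 E.
have [w0|w_neq0] := eqVneq w 0.
  by move: E; rewrite w0 subr0 mul1r mul0r => ->; rewrite mul0r.
have w_gt0 : 0 < w by rewrite lt_neqAle eq_sym w_neq0.
rewrite -(pmulr_rge0 _ w_gt0).
have -> : w * (u * d) = (1 - w) * (u * u) by rewrite mulrCA -E; ring.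
by rewrite mulr_ge0 ?subr_ge0 ?sqr_ge0.
Qed.

Section AWInvertible.
Variables (R : realFieldType) (m r s : nat).
Variables (Lyy : 'M[R]_m) (Jyh : 'M[R]_(r, m)) (Jyg : 'M[R]_(s, m)).
Variables (g0 xi w : 'I_s -> R).
Hypotheses (Hg0 : forall i, g0 i <= 0) (Hcompl : forall i, xi i * g0 i = 0).
Hypotheses (HA2 : SSOSC Lyy Jyh Jyg g0 xi) (HA4 : LICQ Jyh Jyg g0).
Hypothesis Hw : clarke_proj_minus (fun i => g0 i + xi i) w.

Lemma clarke_weight_inactive i : g0 i != 0 -> w i = 1.
Proof.
move=> g_neq0; have g_lt0 : g0 i < 0 by rewrite lt_neqAle g_neq0 Hg0.
have xi0 : xi i = 0 by apply: (mulIf g_neq0); rewrite mul0r Hcompl.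
by case: (Hw i) => -> //; rewrite xi0 addr0.
Qed.

Lemma clarke_weight_strongly_active i : g0 i = 0 -> 0 < xi i -> w i = 0.
Proof. by move=> g0i xi_gt0; case: (Hw i) => _ [-> //]; rewrite g0i add0r. Qed.

Section Kernel.
Variables (dy : 'cV[R]_m) (dmu : 'cV[R]_r) (dxi : 'cV[R]_s).
Hypothesis AW_d0 : AW Lyy Jyh Jyg w *m col_mx dy (col_mx dmu dxi) = 0.

Lemma AW_kernel_eqs :
  [/\ Lyy *m dy + (Jyh^T *m dmu + Jyg^T *m dxi) = 0, Jyh *m dy = 0
    & forall i, (1 - w i) * (Jyg *m dy) i 0 = w i * dxi i 0].
Proof.
move: AW_d0; rewrite /AW !(mul_col_mx, mul_row_col) !mul0mx !add0r addr0.
move=> /eqP; rewrite !col_mx_eq0 => /and3P[/eqP E1 /eqP E2 /eqP E3].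
split=> // i; have := congr1 (fun M : 'cV[R]_s => M i 0) E3.
rewrite -mulmxA mulmxBl mul1mx mulNmx /Wmx !mul_diag_mx !mxE.
by move/(congr1 (fun x => x + w i * dxi i 0)); rewrite add0r => <-; ring.
Qed.

Lemma AW_kernel_curvature_le0 : (dy^T *m Lyy *m dy) 0 0 <= 0.
Proof.
have [E1 E2 E3] := AW_kernel_eqs.
have LyyE : Lyy *m dy = - (Jyh^T *m dmu + Jyg^T *m dxi).
  by apply/eqP; rewrite -addr_eq0 E1.
have -> : dy^T *m Lyy *m dy = - ((Jyg *m dy)^T *m dxi).
  by rewrite -mulmxA LyyE mulmxN mulmxDr !mulmxA -!trmx_mul E2 trmx0 mul0mx add0r.
rewrite mxE oppr_le0 mxE; apply: sumr_ge0 => j _; rewrite mxE.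
exact: complementary_mul_ge0 (clarke_proj_minus_bounds Hw j) (E3 j).
Qed.

Lemma AW_kernel_dy0 : dy = 0.
Proof.
have [_ E2 E3] := AW_kernel_eqs.
have [//|dy_neq0] := eqVneq dy 0.
suff : 0 < (dy^T *m Lyy *m dy) 0 0 by rewrite ltNge AW_kernel_curvature_le0.
apply: HA2 => // i g0i xi_gt0.
by have := E3 i; rewrite (clarke_weight_strongly_active g0i xi_gt0) subr0 mul1r mul0r.
Qed.

Lemma AW_kernel_multipliers0 : dmu = 0 /\ dxi = 0.
Proof.
have [E1 _ E3] := AW_kernel_eqs.
rewrite AW_kernel_dy0 mulmx0 add0r in E1.
have [dmu0 dxi0] : dmu^T = 0 /\ dxi^T = 0.
  apply: HA4 => [i g_neq0|].
    rewrite mxE; have := E3 i.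
    by rewrite (clarke_weight_inactive g_neq0) subrr mul0r mul1r => <-.
  by rewrite -[Jyh]trmxK -[Jyg]trmxK -!trmx_mul -raddfD /= E1 trmx0.
by split; apply: trmx_inj; rewrite trmx0.
Qed.
End Kernel.

Lemma AW_unit : AW Lyy Jyh Jyg w \in unitmx.
Proof.
rewrite -unitmx_tr -row_free_unit; apply/row_freeP => v vAT0.
have AWv0 : AW Lyy Jyh Jyg w *m v^T = 0.
  by rewrite -[AW _ _ _ _]trmxK -trmx_mul vAT0 trmx0.
apply: trmx_inj; rewrite trmx0.
move: AWv0; rewrite -[v^T]vsubmxK -[dsubmx v^T]vsubmxK => AWv0.
have [dmu0 dxi0] := AW_kernel_multipliers0 AWv0.
by rewrite (AW_kernel_dy0 AWv0) dmu0 dxi0 !col_mx0.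
Qed.
End AWInvertible.

Section Elimination.
Variables (R : numFieldType) (n k p : nat).
Variables (E1 : 'M[R]_(p, n)) (E2 : 'M[R]_(p, k)) (B : 'M[R]_(k, n)) (K : 'M[R]_k).
Hypothesis K_unit : K \in unitmx.

Lemma addmx_mulmx_unit_eq0 (j : nat) (c b : 'M[R]_(j, k)) :
  c + b *m K = 0 <-> b = - (c *m invmx K).
Proof.
split=> [/eqP|->]; last by rewrite mulNmx -mulmxA mulVmx // mulmx1 subrr.
rewrite addrC addr_eq0 => /eqP bK.
by rewrite -[b]mulmx1 -(mulmxV K_unit) mulmxA bK mulNmx.
Qed.

Lemma addmx_unit_mulmx_eq0 (j : nat) (c z : 'M[R]_(k, j)) :
  c + K *m z = 0 <-> z = - (invmx K *m c).
Proof.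
split=> [/eqP|->]; last by rewrite mulmxN mulmxA mulmxV // mul1mx subrr.
rewrite addrC addr_eq0 => /eqP Kz.
by rewrite -[z]mul1mx -(mulVmx K_unit) -mulmxA Kz mulmxN.
Qed.

Let A := col_mx (row_mx E1 E2) (row_mx B K).
Let S := invmx K *m B.
Let Ered := E1 - E2 *m S.

Lemma elim_left_kernelP (a : 'rV[R]_p) (b : 'rV[R]_k) :
  row_mx a b *m A = 0 <-> a *m Ered = 0 /\ b = - (a *m E2 *m invmx K).
Proof.
have aEred : a *m Ered = a *m E1 + - (a *m E2 *m invmx K) *m B.
  by rewrite mulmxBr mulNmx !mulmxA.
rewrite /A mul_row_col !mul_mx_row add_row_mx -row_mx0; split.
  by case/eq_row_mx => e1 /addmx_mulmx_unit_eq0 bE; rewrite aEred -bE.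
case=> aE0 bE; congr row_mx; last exact/addmx_mulmx_unit_eq0.
by rewrite bE -aEred.
Qed.

Lemma elim_right_kernelP (x : 'cV[R]_n) (z : 'cV[R]_k) :
  A *m col_mx x z = 0 <-> Ered *m x = 0 /\ z = - (S *m x).
Proof.
have Sx : S *m x = invmx K *m (B *m x) by rewrite mulmxA.
have Ered_x : Ered *m x = E1 *m x + E2 *m - (S *m x).
  by rewrite mulmxBl mulmxN -mulmxA.
rewrite /A mul_col_mx !mul_row_col -col_mx0 Sx; split.
  by case/eq_col_mx => e1 /addmx_unit_mulmx_eq0 zE; rewrite Ered_x Sx -zE.
case=> Ex0 zE; congr col_mx; last exact/addmx_unit_mulmx_eq0.
by rewrite zE -Ex0 Ered_x Sx.
Qed.

Lemma row_free_elim : row_free A = row_free Ered.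
Proof.
apply/row_freeP/row_freeP => [rfA a aE0|rfE v].
  have /rfA : row_mx a (- (a *m E2 *m invmx K)) *m A = 0.
    exact/elim_left_kernelP.
  by rewrite -row_mx0 => /eq_row_mx[].
rewrite -[v]hsubmxK => /elim_left_kernelP[/rfE a0 ->].
by rewrite a0 !mul0mx oppr0 row_mx0.
Qed.

Lemma mfcq_elim (q : nat) (G1 : 'M[R]_(q, n)) (G2 : 'M[R]_(q, k))
    (active : 'I_q -> Prop) :
  MFCQ A (row_mx G1 G2) active <-> MFCQ Ered (G1 - G2 *m S) active.
Proof.
have G_lift x : row_mx G1 G2 *m col_mx x (- (S *m x)) = (G1 - G2 *m S) *m x.
  by rewrite mul_row_col mulmxBl mulmxN mulmxA.
rewrite /MFCQ row_free_elim; split=> -[rf [d [Ad0 Gd]]]; split=> //.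
  move: Ad0 Gd; rewrite -[d]vsubmxK => /elim_right_kernelP[Ex0 ->].
  by rewrite G_lift => Gd; exists (usubmx d).
exists (col_mx d (- (S *m d))); split; first exact/elim_right_kernelP.
by rewrite G_lift.
Qed.
End Elimination.

Section GMFCQReformulation.
Variables (R : realFieldType) (n m r s p q : nat).
Variables (Lyy : 'M[R]_m) (Lyx : 'M[R]_(m, n)).
Variables (Jxh : 'M[R]_(r, n)) (Jyh : 'M[R]_(r, m)).
Variables (Jxg : 'M[R]_(s, n)) (Jyg : 'M[R]_(s, m)).
Variables (JxH : 'M[R]_(p, n)) (JyH : 'M[R]_(p, m)).
Variables (JxG : 'M[R]_(q, n)) (JyG : 'M[R]_(q, m)).
Variables (g0 xi : 'I_s -> R) (G0 : 'I_q -> R).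

Lemma GMFCQ_Omega1E :
  GMFCQ_Omega1 Lyy Lyx Jxh Jyh Jxg Jyg JxH JyH JxG JyG g0 xi G0 <->
  forall w, clarke_proj_minus (fun i => g0 i + xi i) w ->
    let H := invmx (AW Lyy Jyh Jyg w) *m BW Lyx Jxh Jxg w in
    MFCQ (JxH - row_mx JyH 0 *m H) (JxG - row_mx JyG 0 *m H) (fun i => G0 i = 0).
Proof. by split=> Omega1 w /Omega1; rewrite /HyW /= !mul_row0_mx. Qed.

Lemma GMFCQ_Omega2E :
  GMFCQ_Omega2 Lyy Lyx Jxh Jyh Jxg Jyg JxH JyH JxG JyG g0 xi G0 <->
  forall w, clarke_proj_minus (fun i => g0 i + xi i) w ->
    MFCQ (col_mx (row_mx JxH (row_mx JyH 0))
                 (row_mx (BW Lyx Jxh Jxg w) (AW Lyy Jyh Jyg w)))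
         (row_mx JxG (row_mx JyG 0)) (fun i => G0 i = 0).
Proof.
have G_split (d : 'cV[R]_(n + (m + (r + s)))) :
    row_mx JxG (row_mx JyG 0) *m d = JxG *m usubmx d + JyG *m usubmx (dsubmx d).
  by rewrite -[d in LHS]vsubmxK mul_row_col mul_row0_mx.
split=> Omega2 w /Omega2 /= [rfA [d [Ad0 Gd]]]; split=> //; exists d; split=> // i.
  by rewrite G_split; apply: Gd.
by rewrite -G_split; apply: Gd.
Qed.
End GMFCQReformulation.

Theorem proposition4p1 (R : realFieldType) (n m r s p q : nat)
    (Jyf : 'rV[R]_m)
    (Lyy : 'M[R]_m) (Lyx : 'M[R]_(m, n))
    (Jxh : 'M[R]_(r, n)) (Jyh : 'M[R]_(r, m))
    (Jxg : 'M[R]_(s, n)) (Jyg : 'M[R]_(s, m))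
    (JxH : 'M[R]_(p, n)) (JyH : 'M[R]_(p, m))
    (JxG : 'M[R]_(q, n)) (JyG : 'M[R]_(q, m))
    (g0 : 'I_s -> R) (mu : 'I_r -> R) (xi : 'I_s -> R) (G0 : 'I_q -> R)
    (* KKT conditions for (mus, xis) at (xs, ys) *)
    (Hstat : Jyf + (\row_i mu i) *m Jyh + (\row_i xi i) *m Jyg = 0)
    (Hg0 : forall i, g0 i <= 0) (Hxi : forall i, 0 <= xi i)
    (Hcompl : forall i, xi i * g0 i = 0)
    (HA2 : SSOSC Lyy Jyh Jyg g0 xi)
    (HA4 : LICQ Jyh Jyg g0) :
  GMFCQ_Omega1 Lyy Lyx Jxh Jyh Jxg Jyg JxH JyH JxG JyG g0 xi G0 <->
  GMFCQ_Omega2 Lyy Lyx Jxh Jyh Jxg Jyg JxH JyH JxG JyG g0 xi G0.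
Proof.
have elim_at w (Hw : clarke_proj_minus (fun i => g0 i + xi i) w) :=
  mfcq_elim JxH (row_mx JyH 0) (BW Lyx Jxh Jxg w) (AW_unit Hg0 Hcompl HA2 HA4 Hw).
split=> [/GMFCQ_Omega1E Omega1|/GMFCQ_Omega2E Omega2].
  by apply/GMFCQ_Omega2E => w Hw; apply/(elim_at w Hw)/Omega1.
by apply/GMFCQ_Omega1E => w Hw; apply/(elim_at w Hw)/Omega2.
Qed.
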